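(* For $n\ge1$ and $0\le i\le\lfloor (n-1)/2\rfloor$, $b(n+1,i+1,n)=P(n,i)$, where $P(n,i)$ is the number of permutations $\pi\in\mathfrak{S}_n$ with exactly $i$ interior peaks.
   Context: An interior peak of $\pi\in\mathfrak{S}_n$ is an index $m\in\{2,\dots,n-1\}$ with $\pi(m-1)<\pi(m)>\pi(m+1)$. The integers $b(n,i,j)$ ($n\ge1$) are defined by $b(1,0,0)=1$, $b(1,i,j)=0$ for $(i,j)\ne(0,0)$, $b(n,i,j)=0$ if $i<0$ or $j<0$, and $b(n+1,i,j)=b(n,i,j)+2i\,b(n,i,j-1)+(n-2i+2)\,b(n,i-1,j-1)$. *)

From mathcomp Require Import all_boot all_order all_algebra all_fingroup.
Set Implicit Arguments. Unset Strict Implicit. Unset Printing Implicit Defensive.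
Import GRing.Theory Num.Theory.
Local Open Scope ring_scope.

(* b n i j, with i j ranging over int so that the convention b(n,i,j)=0 for
   i<0 or j<0 is built in. n = 0 is outside the paper's range (value 0). *)
Fixpoint b (n : nat) (i j : int) {struct n} : int :=
  match n with
  | 0%N => 0
  | 1%N => if (i == 0) && (j == 0) then 1 else 0
  | (m.+1) as n' =>
      if (i < 0) || (j < 0) then 0 else
      b m i j + (2 * i) * b m i (j - 1)
        + ((m%:Z) - 2 * i + 2) * b m (i - 1) (j - 1)
  end.

(* interior peaks of a permutation of {1..n}, positions 0-indexed:
   m with 1 <= m <= n-2 and pi(m-1) < pi(m) > pi(m+1). *)
Definition is_interior_peak (n : nat) (pi : 'S_n) (m : nat) : bool :=
  [exists h : ('I_n * 'I_n * 'I_n),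
     [&& nat_of_ord h.1.1 == m.-1, nat_of_ord h.1.2 == m,
         nat_of_ord h.2 == m.+1, 0 < m,
         pi h.1.1 < pi h.1.2 & pi h.2 < pi h.1.2]%N].

Definition num_interior_peaks (n : nat) (pi : 'S_n) : nat :=
  #|[set m : 'I_n | is_interior_peak pi m]|.

Definition P (n i : nat) : nat := #|[set pi : 'S_n | num_interior_peaks pi == i]|.

(* Write permutations in one-line notation.  Every word on {0, ..., n} is obtained
   in exactly one way by inserting the letter n into a word on {0, ..., n-1}.
   Inserting the maximum into a word of length n >= 1 with p interior peaks
   destroys the peaks adjacent to it and creates one at itself unless it lands at
   an end, so 2p + 2 of the n + 1 slots keep p peaks and the other n - 1 - 2p
   slots yield p + 1 peaks.  Hence
     P(n+1, i) = (2i + 2) P(n, i) + (n + 1 - 2i) P(n, i-1).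
   Since b(n, i, j) = 0 for j >= n, the diagonal of b obeys the same recurrence,
     b(n+2, i+1, n+1) = (2i + 2) b(n+1, i+1, n) + (n + 1 - 2i) b(n+1, i, n),
   with the same initial values b(2, i+1, 1) = P(1, i) = [i = 0]. *)

From mathcomp Require Import all_boot all_order all_algebra all_fingroup.
From mathcomp Require Import zify.

Set Implicit Arguments.
Unset Strict Implicit.
Unset Printing Implicit Defensive.

Definition peak_head (x : nat) (s : seq nat) : bool :=
  if s is y :: z :: _ then (x < y) && (z < y) else false.

Fixpoint peaks (s : seq nat) : nat :=
  if s is x :: s' then peak_head x s' + peaks s' else 0.

Fixpoint peak_at (s : seq nat) (j : nat) : bool :=
  match s, j with
  | x :: s', 1 => peak_head x s'
  | _ :: s', j'.+2 => peak_at s' j'.+1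
  | _, _ => false
  end.

Lemma peak_atE s j : peak_at s j =
  [&& 0 < j, j.+1 < size s, nth 0 s j.-1 < nth 0 s j & nth 0 s j.+1 < nth 0 s j].
Proof.
elim: s j => [|x s IH] [|[|j]] //=.
by case: s {IH} => [|y [|z s]] //=; rewrite andbC.
Qed.

Lemma peak_at0 s : peak_at s 0 = false. Proof. by case: s. Qed.

Lemma peak_at_size s : peak_at s (size s) = false.
Proof. by rewrite peak_atE [_.+1 < _]ltnNge leqnSn andbF. Qed.

(* No peak sits at an end of a word and no two peaks are adjacent. *)
Lemma peak_at_pair_le t k : peak_at t k.-1 + peak_at t k <= (0 < k < size t).
Proof.
rewrite !peak_atE; case: k => [|[|k]] /=; rewrite ?add0n //.
  by case: and3P => [[h _ _]|]; rewrite ?(ltnW h).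
by do 2 case: and3P => [[? ? ?]|_]; rewrite /=; lia.
Qed.

Fixpoint insert_at (N k : nat) (t : seq nat) : seq nat :=
  match k, t with
  | k'.+1, x :: t' => x :: insert_at N k' t'
  | _, _ => N :: t
  end.

Lemma insert_atE N k t : insert_at N k t = take k t ++ N :: drop k t.
Proof. by elim: t k => [|x t IH] [|k] //=; rewrite IH. Qed.

Lemma peaks_insert_at N t k : all (fun x => x < N) t -> k <= size t ->
  peaks (insert_at N k t) + peak_at t k.-1 + peak_at t k = peaks t + (0 < k < size t).
Proof.
elim: t k => [|x t IH] [|k] //= /andP[xN tN].
  case: t {IH} tN => [|y t] //= /andP[yN _].
  by rewrite ltnNge (ltnW xN) !addn0.
rewrite ltnS => kt; case: k kt => [|[|k]] kt.
- case: t {IH} tN kt => [|y t] //= /andP[yN _] _.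
  rewrite xN yN /=; case: t => [|z t] /=; lia.
- have := IH 1 tN kt; rewrite /= peak_at0.
  case: t {IH} tN kt => [|y t] //= /andP[yN _] _.
  rewrite (_ : N < y = false) ?andbF /=; lia.
- have -> : peak_head x (insert_at N k.+2 t) = peak_head x t.
    by case: t {IH tN} kt => [|y [|z t]].
  have := IH k.+2 tN kt; rewrite /=; lia.
Qed.

Lemma sum_peak_at s : \sum_(0 <= j < size s) peak_at s j = peaks s.
Proof.
elim: s => [|x s IH]; first by rewrite big_nil.
rewrite /= big_nat_recl //= -IH.
case: s {IH} => [|y s]; first by rewrite !big_nil.
by rewrite /= !big_nat_recl //= peak_at0 add0n.
Qed.

Definition peak_gain (t : seq nat) (k : nat) : bool :=
  (0 < k < size t) && ~~ (peak_at t k.-1 || peak_at t k).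

Lemma peak_gain_split t k :
  (0 < k < size t) = peak_gain t k + peak_at t k.-1 + peak_at t k :> nat.
Proof.
have := peak_at_pair_le t k; rewrite /peak_gain.
by case: (0 < k < size t); case: (peak_at t k.-1); case: (peak_at t k).
Qed.

Lemma peaks_insert_max N t k : all (fun x => x < N) t -> k <= size t ->
  peaks (insert_at N k t) = peaks t + peak_gain t k.
Proof.
move=> tN kt; have := peaks_insert_at tN kt; rewrite peak_gain_split; lia.
Qed.

Lemma sum_peak_gain t :
  \sum_(0 <= k < (size t).+1) peak_gain t k + (peaks t).*2 = (size t).-1.
Proof.
have sum_pred : \sum_(0 <= k < (size t).+1) peak_at t k.-1 = peaks t.
  by rewrite big_nat_recl //= peak_at0 sum_peak_at.
have sum_id : \sum_(0 <= k < (size t).+1) peak_at t k = peaks t.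
  by rewrite big_nat_recr //= peak_at_size addn0 sum_peak_at.
have sum_interior : \sum_(0 <= k < (size t).+1) (0 < k < size t) = (size t).-1.
  rewrite big_nat_recr //= ltnn andbF addn0; case: (size t) => [|n]; first exact: big_geq.
  rewrite big_nat_recl // add0n (eq_big_nat _ _ (F2 := fun=> 1)) => [|k /andP[_ kn]].
    by rewrite sum_nat_const_nat subn0 muln1.
  by rewrite /= ltnS kn.
rewrite -{}sum_interior -addnn -{1}sum_pred -{1}sum_id -!big_split /=.
by apply: eq_bigr => k _; rewrite peak_gain_split addnA.
Qed.

Lemma perm_eq_permutations (T : eqType) (r : seq T) (s : seq (seq T)) :
    uniq r -> uniq s -> {subset s <= [pred u | perm_eq u r]} ->
    size s = (size r)`! ->
  perm_eq s (permutations r).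
Proof.
move=> Ur Us s_perm size_s; apply: uniq_perm => //; first exact: permutations_uniq.
have s_sub : {subset s <= permutations r}.
  by move=> u /s_perm; rewrite mem_permutations.
have size_le : size (permutations r) <= size s by rewrite size_permutations ?size_s.
by have [_] := uniq_min_size Us s_sub size_le.
Qed.

Lemma perm_insert_at N k t : perm_eq (insert_at N k t) (N :: t).
Proof. by rewrite insert_atE -cat1s perm_catCA cat_take_drop. Qed.

Lemma index_insert_at N k t : N \notin t -> k <= size t -> index N (insert_at N k t) = k.
Proof.
elim: t k => [|x t IH] [|k] //=; rewrite ?eqxx // inE => /norP[/negbTE Nx Nt] kt.
by rewrite eq_sym Nx IH.
Qed.

Lemma rem_insert_at N k t : N \notin t -> rem N (insert_at N k t) = t.
Proof.
elim: t k => [|x t IH] [|k] //=; rewrite ?eqxx // inE => /norP[/negbTE Nx Nt].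
by rewrite eq_sym Nx IH.
Qed.

Lemma insert_at_inj N k1 k2 t1 t2 :
    N \notin t1 -> N \notin t2 -> k1 <= size t1 -> k2 <= size t2 ->
  insert_at N k1 t1 = insert_at N k2 t2 -> (t1, k1) = (t2, k2).
Proof.
move=> N1 N2 k1t k2t eq12; congr (_, _).
  by rewrite -(rem_insert_at k1 N1) eq12 rem_insert_at.
by rewrite -(index_insert_at N1 k1t) eq12 index_insert_at.
Qed.

Fixpoint insert_perms (n : nat) : seq (seq nat) :=
  if n is m.+1 then [seq insert_at m k t | t <- insert_perms m, k <- iota 0 m.+1]
  else [:: [::]].

Lemma insert_permsS n :
  insert_perms n.+1 = [seq insert_at n k t | t <- insert_perms n, k <- iota 0 n.+1].
Proof. by []. Qed.

Lemma insert_perms_perm_eq n t : t \in insert_perms n -> perm_eq t (iota 0 n).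
Proof.
elim: n t => [|n IH] t; first by rewrite inE => /eqP ->.
rewrite insert_permsS => /allpairsP[[s k] [/IH s_perm _ ->]].
rewrite (permPl (perm_insert_at _ _ _)) -addn1 iotaD.
by rewrite cats1 perm_sym perm_rcons perm_cons perm_sym.
Qed.

Lemma insert_perms_notin n t : t \in insert_perms n -> n \notin t.
Proof. by move/insert_perms_perm_eq/perm_mem ->; rewrite mem_iota ltnn andbF. Qed.

Lemma insert_perms_uniq n : uniq (insert_perms n).
Proof.
elim: n => [|n IH] //; rewrite insert_permsS.
apply: allpairs_uniq => //; first exact: iota_uniq.
move=> _ _ /allpairsP[[t1 k1] [t1P k1P ->]] /allpairsP[[t2 k2] [t2P k2P ->]].
have size_t t : t \in insert_perms n -> size t = n.
  by move/insert_perms_perm_eq/perm_size; rewrite size_iota.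
rewrite !mem_iota /= in t1P t2P k1P k2P *.
by apply: insert_at_inj; rewrite ?insert_perms_notin ?size_t.
Qed.

Lemma size_insert_perms n : size (insert_perms n) = n`!.
Proof.
by elim: n => [|n IH] //; rewrite insert_permsS size_allpairs IH size_iota factS mulnC.
Qed.

Lemma perm_eq_insert_perms n : perm_eq (insert_perms n) (permutations (iota 0 n)).
Proof.
apply: perm_eq_permutations; rewrite ?iota_uniq ?insert_perms_uniq //.
  exact: insert_perms_perm_eq.
by rewrite size_insert_perms size_iota.
Qed.

Definition one_line n (pi : 'S_n) : seq nat := [seq val (pi x) | x <- enum 'I_n].

Lemma size_one_line n (pi : 'S_n) : size (one_line pi) = n.
Proof. by rewrite size_map size_enum_ord. Qed.

Lemma nth_one_line n (pi : 'S_n) (x : 'I_n) : nth 0 (one_line pi) x = pi x.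
Proof. by rewrite (nth_map x) ?size_enum_ord ?nth_ord_enum. Qed.

Lemma one_line_inj n : injective (@one_line n).
Proof.
by move=> pi rho eq_pr; apply/permP => x; apply: val_inj; rewrite /= -!nth_one_line eq_pr.
Qed.

Lemma one_line_perm_eq n (pi : 'S_n) : perm_eq (one_line pi) (iota 0 n).
Proof.
rewrite /one_line -val_enum_ord (map_comp val pi); apply: perm_map.
apply: uniq_perm; [|exact: enum_uniq|].
  by rewrite map_inj_uniq ?enum_uniq //; apply: perm_inj.
by move=> x; rewrite mem_enum; apply/mapP; exists (pi^-1 x)%g; rewrite ?mem_enum ?permKV.
Qed.

Lemma perm_eq_one_line n :
  perm_eq [seq one_line pi | pi <- enum 'S_n] (permutations (iota 0 n)).
Proof.
apply: perm_eq_permutations.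
- exact: iota_uniq.
- by rewrite (map_inj_uniq (@one_line_inj n)) enum_uniq.
- by move=> _ /mapP[pi _ ->]; apply: one_line_perm_eq.
- by rewrite size_map -cardE card_Sn size_iota.
Qed.

Lemma is_interior_peak_one_line n (pi : 'S_n) m :
  is_interior_peak pi m = peak_at (one_line pi) m.
Proof.
rewrite peak_atE size_one_line; apply/existsP/and4P.
  case=> [[[a b] c]] /= /and5P[/eqP <- /eqP <- /eqP <- b_gt0 /andP[ab cb]].
  by rewrite !nth_one_line (ltn_ord c).
case=> m_gt0 mn lt_prev lt_next.
have mn' : m.-1 < n by lia.
exists (Ordinal mn', Ordinal (ltnW mn), Ordinal mn) => /=.
by rewrite !eqxx m_gt0 -!nth_one_line /= lt_prev lt_next.
Qed.

Lemma num_interior_peaks_one_line n (pi : 'S_n) :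
  num_interior_peaks pi = peaks (one_line pi).
Proof.
rewrite /num_interior_peaks -sum_peak_at size_one_line big_mkord -sum1_card big_mkcond.
by apply: eq_bigr => m _; rewrite inE is_interior_peak_one_line; case: peak_at.
Qed.

Definition peak_count n i := \sum_(t <- insert_perms n) (peaks t == i).

Lemma P_peak_count n i : P n i = peak_count n i.
Proof.
have perm_lists : perm_eq [seq one_line pi | pi <- enum 'S_n] (insert_perms n).
  by rewrite (permPr (perm_eq_insert_perms n)) perm_eq_one_line.
rewrite /P /peak_count -(perm_big _ perm_lists) big_map -sum1_card big_mkcond big_enum /=.
by apply: eq_bigr => pi _; rewrite inE num_interior_peaks_one_line; case: eqP.
Qed.

Section IntegerRecurrences.
Import GRing.Theory Num.Theory Order.TTheory.
Local Open Scope ring_scope.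

Lemma sum_insert_max_peaks N t i : all (fun x => x < N)%N t -> (0 < size t)%N ->
  (\sum_(0 <= k < (size t).+1) (peaks (insert_at N k t) == i))%N%:Z =
  (peaks t == i)%:Z * (2 * i%:Z + 2) +
  ((peaks t).+1 == i)%:Z * ((size t)%:Z + 1 - 2 * i%:Z).
Proof.
move=> tN t_gt0; set p := peaks t; set n := size t.
pose G := (\sum_(0 <= k < n.+1) peak_gain t k)%N.
have sum_no_gain : (\sum_(0 <= k < n.+1) ~~ peak_gain t k + G = n.+1)%N.
  rewrite -big_split /= (eq_bigr (fun=> 1%N)) => [|k _]; last by case: peak_gain.
  by rewrite sum_nat_const_nat subn0 muln1.
rewrite (eq_big_nat _ _
  (F2 := fun k => (p == i) * ~~ peak_gain t k + (p.+1 == i) * peak_gain t k)%N).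
  rewrite big_split -!big_distrr /= -/G.
  move: sum_no_gain; have := sum_peak_gain t; rewrite -/p -/n -/G.
  by case: (p =P i); case: (p.+1 =P i); lia.
move=> k /andP[_ kt]; rewrite peaks_insert_max // -/p.
by case: peak_gain; rewrite /= ?muln0 ?muln1 ?addn0 ?add0n ?addn1.
Qed.

Lemma Posz_sum (I : Type) (r : seq I) (F : I -> nat) :
  (\sum_(j <- r) F j)%N%:Z = \sum_(j <- r) (F j)%:Z.
Proof. exact: (big_morph _ PoszD). Qed.

Lemma peak_count_rec n i : (0 < n)%N ->
  (peak_count n.+1 i)%:Z = (2 * i%:Z + 2) * (peak_count n i)%:Z +
    (n%:Z + 1 - 2 * i%:Z) * (if i is i'.+1 then peak_count n i' else 0%N)%:Z.
Proof.
move=> n_gt0; rewrite {1}/peak_count insert_permsS big_allpairs_dep Posz_sum.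
rewrite (eq_big_seq (fun t => (peaks t == i)%:Z * (2 * i%:Z + 2) +
                             ((peaks t).+1 == i)%:Z * (n%:Z + 1 - 2 * i%:Z))); last first.
  move=> t /insert_perms_perm_eq t_perm.
  have t_lt : all (fun x => x < n)%N t.
    by rewrite (perm_all _ t_perm); apply/allP => x; rewrite mem_iota.
  have size_t : size t = n by rewrite (perm_size t_perm) size_iota.
  by have := sum_insert_max_peaks i t_lt; rewrite size_t => <-.
rewrite big_split /= -!mulr_suml mulrC [X in _ + X]mulrC /peak_count !Posz_sum.
congr (_ + _ * _); case: i => [|i]; first exact: big1.
by rewrite Posz_sum.
Qed.

Lemma bSS m i j : b m.+2 i j = if (i < 0) || (j < 0) then 0 else
  b m.+1 i j + 2 * i * b m.+1 i (j - 1) + (m.+1%:Z - 2 * i + 2) * b m.+1 (i - 1) (j - 1).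
Proof. by []. Qed.

Lemma b1 i j : b 1 i j = ((i == 0) && (j == 0))%:Z.
Proof. by rewrite /=; case: (_ && _). Qed.

Lemma b_neg m i j : i < 0 -> b m i j = 0.
Proof.
move=> i_lt0; case: m => [|[|m]] //; last by rewrite bSS i_lt0.
by rewrite b1 (negbTE (ltr0_neq0 i_lt0)).
Qed.

Lemma b_vanish m i j : m.+1%:Z <= j -> b m.+1 i j = 0.
Proof.
elim: m i j => [|m IH] i j j_ge; first by rewrite b1 (gt_eqF (_ : 0 < j)) ?andbF //; lia.
by rewrite bSS !IH ?mulr0 ?addr0 ?if_same //; lia.
Qed.

Lemma b_i0 m j : b m.+1 0 j = (j == 0)%:Z.
Proof.
elim: m j => [|m IH] j; first by rewrite b1 eqxx.
rewrite bSS ltxx (b_neg _ _ (ltrN10 _)) mul0r !mulr0 !addr0 IH /=.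
by case: ltrP => // /ltr0_neq0 /negbTE ->.
Qed.

Lemma b_diag_rec n i : b n.+2 i.+1 n.+1 =
  (2 * i%:Z + 2) * b n.+1 i.+1 n + (n%:Z + 1 - 2 * i%:Z) * b n.+1 i n.
Proof.
rewrite bSS (_ : (_ || _) = false); last by rewrite !ltNge !le0z_nat.
rewrite b_vanish // add0r.
have predS (k : nat) : k.+1%:Z - 1 = k by lia.
by rewrite !predS; congr (_ * _ + _ * _); lia.
Qed.

Lemma b_diag_peak_count n i : (0 < n)%N -> b n.+1 i.+1 n = (peak_count n i)%:Z.
Proof.
case: n => // n _; elim: n i => [|n IH] i.
  have -> : peak_count 1 i = (0 == i)%N by rewrite /peak_count /= big_seq1.
  rewrite b_diag_rec !b1 eqxx !andbT.
  by case: i => [|i]; rewrite !eqz_nat /= ?mulr0 ?addr0 ?mulr1.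
rewrite b_diag_rec peak_count_rec // IH.
by case: i => [|i]; rewrite ?b_i0 ?IH.
Qed.

End IntegerRecurrences.

Local Open Scope ring_scope.

Theorem corollary7 (n i : nat) :
  (1 <= n)%N -> (i <= (n - 1)./2)%N ->
  b n.+1 (i.+1)%:Z n%:Z = (P n i)%:Z.
Proof.
by move=> n_gt0 _; rewrite P_peak_count b_diag_peak_count.
Qed.
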